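(* Let $\mathbf L=(L,\vee,\wedge)$ be a partial lattice and $a,b,c,d\in L$. Then: (i) $\mathbf L^*=(L^*,\leq^* )$ is a lattice with lattice operations $x\vee^*y:=\sup_{\leq^*}(x,y)$ and $x\wedge^*y:=\inf_{\leq^*}(x,y)$ for $x,y\in L^*$; (ii) $a\vee b$ is defined in $\mathbf L$ and equals $c$ iff $a\vee^*b=c$; and $a\wedge b$ is defined in $\mathbf L$ and equals $d$ iff $a\wedge^*b=d$; (iii) $a\vee^*b=a\vee b$ if $U(a,b)\neq\emptyset$ and $a\vee^*b=1$ otherwise; $a\wedge^*b=a\wedge b$ if $L(a,b)\neq\emptyset$ and $a\wedge^*b=0$ otherwise.
   Context: A partial lattice is a set $L$ with two partial binary operations $\vee,\wedge$ satisfying strong idempotency, commutativity and associativity (for every assignment, one side is defined iff the other is, and then they are equal) and the duality conditions: if $a\vee b$ is defined and equals $a$ then $a\wedge b$ is defined and equals $b$, and dually. Its induced order is $x\leq y$ iff $x\vee y$ is defined and equals $y$ (iff $x\wedge y$ is defined and equals $x$). $U(a,b)$ and $L(a,b)$ denote the sets of common upper, resp. lower, bounds of $a,b$ in $(L,\leq)$. The two-point extension $\mathbf L^*=(L^*,\leq^* )$ of $\mathbf L$, with new elements $0,1\notin L$: $L^*=L$ if $\vee$ and $\wedge$ are both everywhere defined; $L^*=L\cup\{1\}$ if $\wedge$ is everywhere defined but $\vee$ is not; $L^*=L\cup\{0\}$ if $\vee$ is everywhere defined but $\wedge$ is not; $L^*=L\cup\{0,1\}$ if neither is everywhere defined. The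 order $\leq^*$ on $L^*$ is $\leq$ together with $0\leq^* x$ and $x\leq^* 1$ for all $x\in L^*$ (whenever $0$, resp. $1$, belongs to $L^*$). *)

From Stdlib Require Import ClassicalEpsilon.

Set Implicit Arguments.

Definition pop (T : Type) := T -> T -> option T.

Definition obind {A B : Type} (f : A -> option B) (o : option A) : option B :=
  match o with Some a => f a | None => None end.

(* Strong idempotency, commutativity, associativity: both sides are
   options, equal as options means "one defined iff the other, then equal". *)
Definition strong_idem T (op : pop T) := forall a, op a a = Some a.
Definition strong_comm T (op : pop T) := forall a b, op a b = op b a.
Definition strong_assoc T (op : pop T) :=
  forall a b c, obind (fun x => op x c) (op a b) = obind (fun y => op a y) (op b c).

Record partial_lattice (T : Type) (join meet : pop T) : Prop := {
  pl_join_idem : strong_idem join;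
  pl_meet_idem : strong_idem meet;
  pl_join_comm : strong_comm join;
  pl_meet_comm : strong_comm meet;
  pl_join_assoc : strong_assoc join;
  pl_meet_assoc : strong_assoc meet;
  pl_dual_join : forall a b, join a b = Some a -> meet a b = Some b;
  pl_dual_meet : forall a b, meet a b = Some a -> join a b = Some b
}.

Definition ple T (join : pop T) (x y : T) : Prop := join x y = Some y.

Definition Ub T (join : pop T) (a b : T) : T -> Prop :=
  fun u => ple join a u /\ ple join b u.
Definition Lb T (join : pop T) (a b : T) : T -> Prop :=
  fun l => ple join l a /\ ple join l b.

Definition total_op T (op : pop T) := forall x y, exists z, op x y = Some z.

Inductive ext (T : Type) : Type := Bot | Top | Elt (t : T).
Arguments Bot {T}. Arguments Top {T}.

Definition inS T (join meet : pop T) (x : ext T) : Prop :=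
  match x with
  | Elt _ => True
  | Top => ~ total_op join
  | Bot => ~ total_op meet
  end.

(* the order <=^* (on ext T; only meaningful on elements of L^* ) *)
Definition leS T (join : pop T) (x y : ext T) : Prop :=
  match x, y with
  | Bot, _ => True
  | _, Top => True
  | Elt a, Elt b => ple join a b
  | _, _ => False
  end.

Definition is_supS T (join meet : pop T) (x y s : ext T) : Prop :=
  inS join meet s /\ leS join x s /\ leS join y s /\
  forall z, inS join meet z -> leS join x z -> leS join y z -> leS join s z.

Definition is_infS T (join meet : pop T) (x y s : ext T) : Prop :=
  inS join meet s /\ leS join s x /\ leS join s y /\
  forall z, inS join meet z -> leS join z x -> leS join z y -> leS join z s.

Definition is_lattice_S T (join meet : pop T) : Prop :=
  (forall x, inS join meet x -> leS join x x) /\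
  (forall x y, inS join meet x -> inS join meet y ->
     leS join x y -> leS join y x -> x = y) /\
  (forall x y z, inS join meet x -> inS join meet y -> inS join meet z ->
     leS join x y -> leS join y z -> leS join x z) /\
  (forall x y, inS join meet x -> inS join meet y ->
     exists s, is_supS join meet x y s) /\
  (forall x y, inS join meet x -> inS join meet y ->
     exists i, is_infS join meet x y i).

(* x \/^* y := sup_{<=^*}(x,y), x /\^* y := inf_{<=^*}(x,y), chosen by
   Hilbert's epsilon (they are unique whenever they exist). *)
Definition joinS T (join meet : pop T) (x y : ext T) : ext T :=
  epsilon (inhabits Bot) (fun s => is_supS join meet x y s).
Definition meetS T (join meet : pop T) (x y : ext T) : ext T :=
  epsilon (inhabits Bot) (fun s => is_infS join meet x y s).

(* In L^*, the pair Elt a, Elt b has the supremum Elt (a \/ b) when the join is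
   defined and Top otherwise: by strong associativity, [a \/ b] is defined as soon
   as a and b have a common upper bound u (evaluate [(a \/ b) \/ u = a \/ (b \/ u)]),
   and it is then the least one.  Dually for meets, read in the induced order
   through [x <= y <-> y /\ x = x].  Suprema and infima involving 0 or 1 are
   immediate, and the epsilon-chosen [\/^*] and [/\^*] are the suprema and infima
   because these are unique by antisymmetry. *)
From Stdlib Require Import ClassicalEpsilon.

Set Implicit Arguments.

Section PartialSemilattice.
Variables (T : Type) (op : pop T).
Hypotheses (op_idem : strong_idem op) (op_comm : strong_comm op)
  (op_assoc : strong_assoc op).

Lemma op_absorb_l {a b c} : op a b = Some c -> op a c = Some c.
Proof.
  intro Hab. pose proof (op_assoc a a b) as E.
  rewrite op_idem in E. simpl in E. rewrite Hab in E. simpl in E. congruence.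
Qed.

Lemma op_absorb_r {a b c} : op a b = Some c -> op b c = Some c.
Proof. rewrite op_comm. apply op_absorb_l. Qed.

Lemma op_trans {x y z} : op x y = Some y -> op y z = Some z -> op x z = Some z.
Proof.
  intros Hxy Hyz. pose proof (op_assoc x y z) as E.
  rewrite Hxy, Hyz in E. simpl in E. congruence.
Qed.

Lemma op_least {a b c u} :
  op a b = Some c -> op a u = Some u -> op b u = Some u -> op c u = Some u.
Proof.
  intros Hab Hau Hbu. pose proof (op_assoc a b u) as E.
  rewrite Hab, Hbu in E. simpl in E. congruence.
Qed.

Lemma op_defined_iff_bound a b :
  (exists u, op a u = Some u /\ op b u = Some u) <-> exists c, op a b = Some c.
Proof.
  split.
  - intros [u [Hau Hbu]]. pose proof (op_assoc a b u) as E.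
    rewrite Hbu in E. simpl in E. rewrite Hau in E.
    destruct (op a b); [eauto | discriminate].
  - intros [c Hab]. exists c. split.
    + exact (op_absorb_l Hab).
    + exact (op_absorb_r Hab).
Qed.

End PartialSemilattice.

Section TwoPointExtension.
Variables (T : Type) (join meet : pop T).
Hypothesis HL : partial_lattice join meet.

Let join_idem := pl_join_idem HL.
Let join_comm := pl_join_comm HL.
Let join_assoc := pl_join_assoc HL.
Let meet_idem := pl_meet_idem HL.
Let meet_comm := pl_meet_comm HL.
Let meet_assoc := pl_meet_assoc HL.

Lemma ple_iff_meet x y : ple join x y <-> meet y x = Some x.
Proof.
  unfold ple. split; intro H.
  - apply (pl_dual_join HL). rewrite join_comm. exact H.
  - apply (pl_dual_meet HL). rewrite meet_comm. exact H.
Qed.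

Lemma join_defined_iff_Ub a b : (exists u, Ub join a b u) <-> exists c, join a b = Some c.
Proof. exact (op_defined_iff_bound join_idem join_comm join_assoc a b). Qed.

Lemma meet_defined_iff_Lb a b : (exists l, Lb join a b l) <-> exists d, meet a b = Some d.
Proof.
  rewrite <- (op_defined_iff_bound meet_idem meet_comm meet_assoc).
  unfold Lb. setoid_rewrite ple_iff_meet. reflexivity.
Qed.

Lemma leS_refl x : leS join x x.
Proof. destruct x; simpl; auto. apply join_idem. Qed.

Lemma leS_antisym x y : leS join x y -> leS join y x -> x = y.
Proof.
  destruct x, y; simpl; try tauto. unfold ple. intros Hxy Hyx.
  rewrite join_comm in Hxy. congruence.
Qed.

Lemma leS_trans x y z : leS join x y -> leS join y z -> leS join x z.
Proof. destruct x, y, z; simpl; try tauto. apply (op_trans join_assoc). Qed.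

Lemma is_supS_unique x y s s' :
  is_supS join meet x y s -> is_supS join meet x y s' -> s = s'.
Proof.
  intros [Hs [Hxs [Hys Hleast]]] [Hs' [Hxs' [Hys' Hleast']]].
  apply leS_antisym; auto.
Qed.

Lemma is_infS_unique x y i i' :
  is_infS join meet x y i -> is_infS join meet x y i' -> i = i'.
Proof.
  intros [Hi [Hix [Hiy Hgreatest]]] [Hi' [Hix' [Hiy' Hgreatest']]].
  apply leS_antisym; auto.
Qed.

Lemma joinS_eq x y s : is_supS join meet x y s -> joinS join meet x y = s.
Proof.
  intro Hs. eapply is_supS_unique; [|exact Hs].
  exact (epsilon_spec (inhabits Bot) _ (ex_intro _ s Hs)).
Qed.

Lemma meetS_eq x y i : is_infS join meet x y i -> meetS join meet x y = i.
Proof.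
  intro Hi. eapply is_infS_unique; [|exact Hi].
  exact (epsilon_spec (inhabits Bot) _ (ex_intro _ i Hi)).
Qed.

Lemma is_supS_comm x y s : is_supS join meet x y s -> is_supS join meet y x s.
Proof. unfold is_supS. firstorder. Qed.

Lemma is_infS_comm x y i : is_infS join meet x y i -> is_infS join meet y x i.
Proof. unfold is_infS. firstorder. Qed.

Lemma is_supS_of_leS x y : inS join meet y -> leS join x y -> is_supS join meet x y y.
Proof. repeat split; auto using leS_refl. Qed.

Lemma is_infS_of_leS x y : inS join meet x -> leS join x y -> is_infS join meet x y x.
Proof. repeat split; auto using leS_refl. Qed.

Lemma is_supS_Elt a b c : join a b = Some c -> is_supS join meet (Elt a) (Elt b) (Elt c).
Proof.
  intro Hab. repeat split; simpl.
  - exact (op_absorb_l join_idem join_assoc Hab).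
  - exact (op_absorb_r join_idem join_comm join_assoc Hab).
  - intros [| |u] _ Hau Hbu; simpl in *; try tauto.
    exact (op_least join_assoc Hab Hau Hbu).
Qed.

Lemma is_supS_Top a b : join a b = None -> is_supS join meet (Elt a) (Elt b) Top.
Proof.
  intro Hab. repeat split; simpl.
  - intro Htot. destruct (Htot a b). congruence.
  - intros [| |u] _ Hau Hbu; simpl in *; try tauto.
    destruct (proj1 (join_defined_iff_Ub a b) (ex_intro _ u (conj Hau Hbu))).
    congruence.
Qed.

Lemma is_infS_Elt a b d : meet a b = Some d -> is_infS join meet (Elt a) (Elt b) (Elt d).
Proof.
  intro Hab. repeat split; simpl; rewrite ?ple_iff_meet.
  - exact (op_absorb_l meet_idem meet_assoc Hab).
  - exact (op_absorb_r meet_idem meet_comm meet_assoc Hab).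
  - intros [| |l] _ Hla Hlb; simpl in *; try tauto.
    rewrite ple_iff_meet in *. exact (op_least meet_assoc Hab Hla Hlb).
Qed.

Lemma is_infS_Bot a b : meet a b = None -> is_infS join meet (Elt a) (Elt b) Bot.
Proof.
  intro Hab. repeat split; simpl.
  - intro Htot. destruct (Htot a b). congruence.
  - intros [| |l] _ Hla Hlb; simpl in *; try tauto.
    destruct (proj1 (meet_defined_iff_Lb a b) (ex_intro _ l (conj Hla Hlb))).
    congruence.
Qed.

Lemma is_supS_exists x y :
  inS join meet x -> inS join meet y -> exists s, is_supS join meet x y s.
Proof.
  intros Hx Hy. destruct x as [| |a].
  - exists y. apply is_supS_of_leS; simpl; auto.
  - exists Top. apply is_supS_comm, is_supS_of_leS; auto. destruct y; simpl; auto.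
  - destruct y as [| |b].
    + exists (Elt a). apply is_supS_comm, is_supS_of_leS; simpl; auto.
    + exists Top. apply is_supS_of_leS; simpl; auto.
    + destruct (join a b) eqn:Hab; eexists.
      * exact (is_supS_Elt Hab).
      * exact (is_supS_Top Hab).
Qed.

Lemma is_infS_exists x y :
  inS join meet x -> inS join meet y -> exists i, is_infS join meet x y i.
Proof.
  intros Hx Hy. destruct x as [| |a].
  - exists Bot. apply is_infS_of_leS; simpl; auto.
  - exists y. apply is_infS_comm, is_infS_of_leS; auto. destruct y; simpl; auto.
  - destruct y as [| |b].
    + exists Bot. apply is_infS_comm, is_infS_of_leS; simpl; auto.
    + exists (Elt a). apply is_infS_of_leS; simpl; auto.
    + destruct (meet a b) eqn:Hab; eexists.
      * exact (is_infS_Elt Hab).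
      * exact (is_infS_Bot Hab).
Qed.

Lemma is_lattice_two_point_extension : is_lattice_S join meet.
Proof.
  repeat split.
  - intros x _. apply leS_refl.
  - intros x y _ _. apply leS_antisym.
  - intros x y z _ _ _. apply leS_trans.
  - apply is_supS_exists.
  - apply is_infS_exists.
Qed.

Lemma joinS_Elt a b :
  joinS join meet (Elt a) (Elt b) =
  match join a b with Some c => Elt c | None => Top end.
Proof.
  apply joinS_eq. destruct (join a b) eqn:Hab.
  - exact (is_supS_Elt Hab).
  - exact (is_supS_Top Hab).
Qed.

Lemma meetS_Elt a b :
  meetS join meet (Elt a) (Elt b) =
  match meet a b with Some d => Elt d | None => Bot end.
Proof.
  apply meetS_eq. destruct (meet a b) eqn:Hab.
  - exact (is_infS_Elt Hab).
  - exact (is_infS_Bot Hab).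
Qed.

End TwoPointExtension.

Theorem mainTheorem3 (T : Type) (join meet : T -> T -> option T)
  (HL : partial_lattice join meet) (a b c d : T) :
  (* (i) *)
  is_lattice_S join meet /\
  (* (ii) *)
  (join a b = Some c <-> joinS join meet (Elt a) (Elt b) = Elt c) /\
  (meet a b = Some d <-> meetS join meet (Elt a) (Elt b) = Elt d) /\
  (* (iii) *)
  ((exists u, Ub join a b u) ->
     exists e, join a b = Some e /\ joinS join meet (Elt a) (Elt b) = Elt e) /\
  (~ (exists u, Ub join a b u) -> joinS join meet (Elt a) (Elt b) = Top) /\
  ((exists l, Lb join a b l) ->
     exists e, meet a b = Some e /\ meetS join meet (Elt a) (Elt b) = Elt e) /\
  (~ (exists l, Lb join a b l) -> meetS join meet (Elt a) (Elt b) = Bot).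
Proof.
  rewrite (joinS_Elt HL), (meetS_Elt HL), (join_defined_iff_Ub HL),
    (meet_defined_iff_Lb HL).
  split; [exact (is_lattice_two_point_extension HL) |].
  destruct (join a b), (meet a b); repeat split; intros;
    try congruence; firstorder (try congruence; eauto).
Qed.
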